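(* Let $\gamma>0$, $R>0$ and $j\in\mathbb{N}$. Suppose $w\in\mathbb{C}_+$ satisfies $w=G_{j,R}(w)$, where $$G_{j,R}(w):=\frac{-B_j(w)+iA(w)}{2R},\quad A(w):=\log\left|\frac{\mathrm{sq}_-(w^2+i\gamma)-w}{\mathrm{sq}_-(w^2+i\gamma)+w}\right|,\quad B_j(w):=\arg_-\!\left(\frac{\mathrm{sq}_-(w^2+i\gamma)-w}{\mathrm{sq}_-(w^2+i\gamma)+w}\right)+2\pi j,$$ and suppose $w^2+i\gamma\in\mathbb{C}_+$. Then $w^2+i\gamma\in\sigma_d(L_{\gamma,R})$.
   Context: For $\gamma,R>0$, $L_{\gamma,R}=-\frac{d^2}{dx^2}+i\gamma\chi_{[0,R]}$ on $L^2(\mathbb{R}_+)$ with Dirichlet boundary condition at $0$; $\sigma_d$ denotes the set of eigenvalues of finite algebraic multiplicity in $\mathbb{C}\setminus\mathbb{R}_+$. $\arg_-(\zeta)\in[-\pi,\pi)$ and $\mathrm{sq}_-(\zeta)=\sqrt{|\zeta|}e^{\frac i2\arg_-(\zeta)}$ (branch cut along $\mathbb{R}_-$). *)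

From Stdlib Require Import Reals.
From Coquelicot Require Import Coquelicot.
Open Scope R_scope.

(* arg_-(z) in [-pi, pi): principal argument with branch cut along R_-,
   the negative real axis being assigned the value -pi.  (Value 0 at z = 0.) *)
Definition arg_m (z : C) : R :=
  let x := Re z in let y := Im z in
  match Rlt_dec 0 x with
  | left _ => atan (y / x)
  | right _ =>
    match Rlt_dec x 0 with
    | left _ => match Rlt_dec 0 y with
                | left _ => atan (y / x) + PI
                | right _ => atan (y / x) - PI
                end
    | right _ =>
      match Rlt_dec 0 y with
      | left _ => PI / 2
      | right _ => match Rlt_dec y 0 with
                   | left _ => - (PI / 2)
                   | right _ => 0
                   end
      end
    end
  end.

Definition sq_m (z : C) : C :=
  (sqrt (Cmod z) * cos (arg_m z / 2), sqrt (Cmod z) * sin (arg_m z / 2)).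

Definition iC (g : R) : C := (0, g).

Definition ratio (g : R) (w : C) : C :=
  ((sq_m (w * w + iC g) - w) / (sq_m (w * w + iC g) + w))%C.

Definition A_fun (g : R) (w : C) : R := ln (Cmod (ratio g w)).

Definition B_fun (g : R) (j : nat) (w : C) : R := arg_m (ratio g w) + 2 * PI * INR j.

Definition G_fun (g Rr : R) (j : nat) (w : C) : C :=
  (- B_fun g j w / (2 * Rr), A_fun g w / (2 * Rr)).

Definition pot (g Rr x : R) : C :=
  if Rle_dec x Rr then iC g else 0%C.

(* lam is an eigenvalue of L_{gamma,R} = -d^2/dx^2 + i gamma chi_[0,R] on L^2(R_+)
   with Dirichlet condition at 0: there is a nonzero u in the operator domain
   (H^2(0,oo) with u(0)=0; equivalently u is C^1 on [0,oo), piecewise C^2 off x = R,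
   square integrable) with -u'' + i gamma chi u = lam u. *)
Definition is_eigenvalue (g Rr : R) (lam : C) : Prop :=
  exists u u' : R -> C,
    u 0 = 0%C /\
    filterlim u (at_right 0) (locally (u 0)) /\
    (forall x, 0 < x -> is_derive u x (u' x)) /\
    (forall x, 0 < x -> continuous u' x) /\
    (forall x, 0 < x -> x <> Rr -> is_derive u' x ((pot g Rr x - lam) * u x)%C) /\
    ex_RInt_gen (fun x => Cmod (u x) ^ 2) (at_point 0) (Rbar_locally p_infty) /\
    (exists x, 0 < x /\ u x <> 0%C).

Definition in_sigma_d (g Rr : R) (lam : C) : Prop :=
  ~ (Im lam = 0 /\ 0 <= Re lam) /\ is_eigenvalue g Rr lam.

From Stdlib Require Import Reals Lra.
From Coquelicot Require Import Coquelicot.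
Open Scope R_scope.

(* With lam = w^2 + i gamma and k = sq_-(lam), so that k^2 = lam and Im k > 0, the
   eigenfunction is explicit: u(x) = e^{iwx} - e^{-iwx} solves -u'' + i gamma u = lam u
   on [0, R] with u(0) = 0, and u(x) = c e^{ikx} solves -u'' = lam u on [R, oo) and is
   square integrable there.  The constant c makes u continuous at R, and u' is then
   continuous at R iff e^{2iwR} (k - w) = k + w; taking a logarithm of this condition,
   with the branch arg_- shifted by 2 pi j, is exactly the fixed-point equation
   w = G_{j,R}(w).  Finally u(R) <> 0 because |e^{iwR}| < 1 < |e^{-iwR}|. *)

Definition cexp (z : C) : C := (exp (Re z) * cos (Im z), exp (Re z) * sin (Im z)).

Lemma cexp_add (z1 z2 : C) : cexp (z1 + z2) = (cexp z1 * cexp z2)%C.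
Proof.
  destruct z1 as [a b], z2 as [c d]; unfold cexp; simpl.
  rewrite exp_plus, cos_plus, sin_plus.
  apply injective_projections; simpl; ring.
Qed.

Lemma cexp_0 : cexp 0 = 1.
Proof.
  unfold cexp; simpl; rewrite exp_0, cos_0, sin_0.
  apply injective_projections; simpl; ring.
Qed.

Lemma cexp_opp_mul (z : C) : (cexp (- z) * cexp z)%C = 1.
Proof. rewrite <- cexp_add, <- cexp_0. f_equal. ring. Qed.

Lemma cexp_2PI_INR (n : nat) : cexp (0, 2 * PI * INR n) = 1.
Proof.
  unfold cexp; simpl.
  replace (2 * PI * INR n) with (0 + 2 * INR n * PI) by ring.
  rewrite exp_0, cos_period, sin_period, cos_0, sin_0.
  apply injective_projections; simpl; ring.
Qed.

Lemma Cmod_cexp (z : C) : Cmod (cexp z) = exp (Re z).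
Proof.
  unfold cexp, Cmod, Re, Im; cbn [fst snd].
  replace ((exp (fst z) * cos (snd z)) ^ 2 + (exp (fst z) * sin (snd z)) ^ 2)
    with (exp (fst z) ^ 2 * ((sin (snd z))² + (cos (snd z))²)) by (unfold Rsqr; ring).
  rewrite sin2_cos2, Rmult_1_r, sqrt_pow2; auto.
  left; apply exp_pos.
Qed.

Lemma cexp_neq_cexp_opp (z : C) : Re z <> 0 -> cexp z <> cexp (- z).
Proof.
  intros Hz Heq. apply (f_equal Cmod) in Heq.
  rewrite !Cmod_cexp in Heq. apply exp_inv in Heq.
  destruct z; simpl in *. lra.
Qed.

Lemma is_derive_pair (f : R -> C) (x a b : R) :
  is_derive (fun t => fst (f t)) x a -> is_derive (fun t => snd (f t)) x b ->
  is_derive f x (a, b).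
Proof.
  intros Ha Hb.
  pose proof (filterdiff_comp'_2 (fun t => fst (f t)) (fun t => snd (f t))
     (fun u v => (u, v) : C) x _ _ (fun u v => (u, v) : C) Ha Hb) as H.
  assert (Hpair : filterdiff
       (fun t : prod_NormedModule R_AbsRing R_NormedModule R_NormedModule =>
        ((fst t, snd t) : C)) (locally (fst (f x), snd (f x)))
       (fun t : prod_NormedModule R_AbsRing R_NormedModule R_NormedModule =>
        ((fst t, snd t) : C))).
  { eapply filterdiff_ext_lin; [eapply filterdiff_ext; [|apply filterdiff_id]|];
      intros [p q]; reflexivity. }
  specialize (H Hpair).
  eapply filterdiff_ext_lin; [eapply filterdiff_ext; [|exact H]|].
  - intros t; simpl; destruct (f t); reflexivity.
  - reflexivity.
Qed.

Lemma is_derive_cexp_mult (c z : C) (x : R) :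
  is_derive (fun t : R => c * cexp (z * t))%C x (c * z * cexp (z * x))%C.
Proof.
  replace (c * z * cexp (z * x))%C
    with (fst (c * z * cexp (z * x))%C, snd (c * z * cexp (z * x))%C)
    by (destruct (c * z * cexp (z * x))%C; reflexivity).
  destruct c as [c1 c2], z as [z1 z2].
  apply is_derive_pair; unfold cexp, RtoC; simpl; auto_derive; auto; unfold Rminus; ring.
Qed.

Definition expsum (a b z : C) (t : R) : C := (a * cexp (z * t) + b * cexp (- z * t))%C.

Lemma is_derive_expsum (a b z : C) (x : R) :
  is_derive (expsum a b z) x (expsum (a * z) (- (b * z)) z x).
Proof.
  replace (expsum (a * z) (- (b * z)) z x)
    with (plus (a * z * cexp (z * x)) (b * - z * cexp (- z * x)))%C
    by (unfold expsum, plus; simpl; ring).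
  apply (is_derive_plus (fun t : R => a * cexp (z * t))%C (fun t : R => b * cexp (- z * t))%C);
    apply is_derive_cexp_mult.
Qed.

Lemma sqrt_sum_sq_factor (x y : R) : x <> 0 -> sqrt (x ^ 2 + y ^ 2) = Rabs x * sqrt (1 + (y / x)²).
Proof.
  intros Hx.
  replace (x ^ 2 + y ^ 2) with (x² * (1 + (y / x)²)) by (unfold Rsqr; field; auto).
  pose proof (Rle_0_sqr (y / x)).
  rewrite sqrt_mult, sqrt_Rsqr_abs; auto using Rle_0_sqr; lra.
Qed.

Lemma polar_arg_m (z : C) : z <> 0%C -> ((Cmod z * cos (arg_m z), Cmod z * sin (arg_m z)) : C) = z.
Proof.
  destruct z as [x y]. intros Hz.
  unfold arg_m, Cmod, Re, Im; cbn [fst snd].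
  assert (Hsq : x <> 0 -> 0 < sqrt (1 + (y / x)²)).
  { intros. apply sqrt_lt_R0. pose proof (Rle_0_sqr (y / x)); lra. }
  destruct (Rlt_dec 0 x) as [Hx|Hx].
  - specialize (Hsq ltac:(lra)).
    rewrite cos_atan, sin_atan, sqrt_sum_sq_factor, Rabs_pos_eq by lra.
    apply injective_projections; simpl; field; lra.
  - destruct (Rlt_dec x 0) as [Hx'|Hx'].
    + specialize (Hsq ltac:(lra)).
      rewrite sqrt_sum_sq_factor, Rabs_left by lra.
      destruct (Rlt_dec 0 y).
      * rewrite neg_cos, neg_sin, cos_atan, sin_atan.
        apply injective_projections; simpl; field; lra.
      * rewrite cos_minus, sin_minus, cos_PI, sin_PI, cos_atan, sin_atan.
        apply injective_projections; simpl; field; lra.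
    + assert (x = 0) by lra. subst x.
      destruct (Rlt_dec 0 y); [|destruct (Rlt_dec y 0)].
      * rewrite cos_PI2, sin_PI2.
        replace (0 ^ 2 + y ^ 2) with (y ^ 2) by ring. rewrite sqrt_pow2 by lra.
        apply injective_projections; simpl; ring.
      * rewrite cos_neg, sin_neg, cos_PI2, sin_PI2.
        replace (0 ^ 2 + y ^ 2) with ((- y) ^ 2) by ring. rewrite sqrt_pow2 by lra.
        apply injective_projections; simpl; ring.
      * exfalso. apply Hz. apply injective_projections; simpl; lra.
Qed.

Lemma cexp_ln_Cmod_arg_m (z : C) : z <> 0%C -> cexp (ln (Cmod z), arg_m z) = z.
Proof.
  intros Hz. unfold cexp; simpl.
  rewrite exp_ln by (apply Cmod_gt_0; exact Hz).
  exact (polar_arg_m z Hz).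
Qed.

Lemma sq_m_mul_self (z : C) : (sq_m z * sq_m z)%C = z.
Proof.
  destruct (Req_EM_T (Cmod z) 0) as [H0|H0].
  - apply Cmod_eq_0 in H0. subst z. unfold sq_m. rewrite Cmod_0, sqrt_0.
    apply injective_projections; simpl; ring.
  - assert (Hz : z <> 0%C) by (intros ->; apply H0, Cmod_0).
    rewrite <- (polar_arg_m z Hz) at 3.
    unfold sq_m.
    set (t := arg_m z / 2).
    replace (arg_m z) with (2 * t) by (unfold t; field).
    pose proof (sqrt_sqrt (Cmod z) (Cmod_ge_0 z)) as Hs.
    set (s := sqrt (Cmod z)) in *.
    rewrite cos_2a, sin_2a, <- Hs.
    apply injective_projections; simpl; ring.
Qed.

Lemma arg_m_bounds_Im_pos (z : C) : 0 < Im z -> 0 < arg_m z < PI.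
Proof.
  destruct z as [x y]. unfold arg_m, Re, Im; cbn [fst snd]. intros Hy.
  pose proof PI_RGT_0.
  pose proof (atan_bound (y / x)).
  destruct (Rlt_dec 0 x) as [Hx|Hx].
  - assert (Hyx : 0 < y / x) by (apply Rdiv_lt_0_compat; lra).
    pose proof (atan_increasing 0 (y / x) Hyx). rewrite atan_0 in *. lra.
  - destruct (Rlt_dec x 0) as [Hx'|Hx']; destruct (Rlt_dec 0 y); try lra.
    assert (Hyx : y / x < 0).
    { replace (y / x) with (- (y / - x)) by (field; lra).
      assert (0 < y / - x) by (apply Rdiv_lt_0_compat; lra). lra. }
    pose proof (atan_increasing (y / x) 0 Hyx). rewrite atan_0 in *. lra.
Qed.

Lemma Im_sq_m_pos (z : C) : 0 < Im z -> 0 < Im (sq_m z).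
Proof.
  intros Hz. pose proof (arg_m_bounds_Im_pos z Hz).
  unfold sq_m, Im at 1; cbn [snd].
  apply Rmult_lt_0_compat.
  - apply sqrt_lt_R0, Cmod_gt_0. intros ->. simpl in Hz. lra.
  - apply sin_gt_0; lra.
Qed.

Section Glue.

Context {V : NormedModule R_AbsRing}.

Definition glue (r : R) (f g : R -> V) (t : R) : V := if Rle_dec t r then f t else g t.

Variables (r : R) (f g : R -> V).

Lemma glue_eq_left (x : R) : x < r -> locally x (fun t => f t = glue r f g t).
Proof.
  intros Hx. assert (Hp : 0 < r - x) by lra.
  exists (mkposreal _ Hp). intros y Hy. unfold glue.
  apply Rabs_lt_between' in Hy. simpl in Hy.
  destruct (Rle_dec y r); [reflexivity | lra].
Qed.

Lemma glue_eq_right (x : R) : r < x -> locally x (fun t => g t = glue r f g t).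
Proof.
  intros Hx. assert (Hp : 0 < x - r) by lra.
  exists (mkposreal _ Hp). intros y Hy. unfold glue.
  apply Rabs_lt_between' in Hy. simpl in Hy.
  destruct (Rle_dec y r); [lra | reflexivity].
Qed.

Lemma is_derive_glue_neq (f' g' : R -> V) (x : R) : x <> r ->
  is_derive f x (f' x) -> is_derive g x (g' x) -> is_derive (glue r f g) x (glue r f' g' x).
Proof.
  intros Hx Hf Hg. unfold glue at 2.
  destruct (Rle_dec x r).
  - apply (is_derive_ext_loc f); [apply glue_eq_left; lra | exact Hf].
  - apply (is_derive_ext_loc g); [apply glue_eq_right; lra | exact Hg].
Qed.

Lemma is_derive_glue_eq (l : V) :
  f r = g r -> is_derive f r l -> is_derive g r l -> is_derive (glue r f g) r l.
Proof.
  intros Heq [Hl Hf] [_ Hg]; split; auto.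
  intros x Hx.
  apply (@is_filter_lim_locally_unique R_AbsRing R_NormedModule) in Hx. subst x.
  intros eps.
  assert (Hr : is_filter_lim (locally r) r) by (intros P HP; exact HP).
  generalize (filter_and _ _ (Hf r Hr eps) (Hg r Hr eps)).
  apply filter_imp. intros y [H1 H2].
  unfold glue. destruct (Rle_dec r r) as [_|Hn]; [|lra].
  destruct (Rle_dec y r); [exact H1 | rewrite Heq; exact H2].
Qed.

Lemma continuous_glue_eq : f r = g r -> continuous f r -> continuous g r -> continuous (glue r f g) r.
Proof.
  intros Heq Hf Hg.
  apply filterlim_locally. intros eps.
  apply filterlim_locally with (eps := eps) in Hf.
  apply filterlim_locally with (eps := eps) in Hg.
  generalize (filter_and _ _ Hf Hg).
  apply filter_imp. intros y [H1 H2].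
  unfold glue. destruct (Rle_dec r r) as [_|Hn]; [|lra].
  destruct (Rle_dec y r); [exact H1 | rewrite Heq; exact H2].
Qed.

End Glue.

Lemma is_lim_exp_decay (c : R) : 0 < c -> is_lim (fun x => exp (- c * x)) p_infty 0.
Proof.
  intros Hc.
  apply (is_lim_comp exp (fun x => - c * x) p_infty 0 m_infty is_lim_exp_m).
  - apply is_lim_ext with (fun x => - (c * x)); [intros; ring|].
    replace m_infty with (Rbar_opp (Rbar_mult c p_infty)).
    + apply is_lim_opp, is_lim_scal_l, is_lim_id.
    + simpl. unfold Rbar_mult'. destruct (Rle_dec 0 c); [|lra].
      destruct (Rle_lt_or_eq_dec 0 c r); [reflexivity|lra].
  - exists 0. intros; discriminate.
Qed.

Lemma ex_RInt_gen_exp_decay (a c r : R) : 0 < c ->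
  ex_RInt_gen (fun x => a * exp (- c * x)) (at_point r) (Rbar_locally p_infty).
Proof.
  intros Hc.
  set (F := fun x => - a / c * exp (- c * x)).
  assert (HDF : forall x, Derive F x = a * exp (- c * x)).
  { intros x. apply is_derive_unique. unfold F. auto_derive; auto. field. lra. }
  exists (0 - F r).
  apply (is_RInt_gen_ext (Derive F)).
  { apply Filter_prod with (fun _ => True) (fun _ => True); [exact I | apply filter_true |].
    intros; apply HDF. }
  apply is_RInt_gen_Derive.
  - apply Filter_prod with (fun _ => True) (fun _ => True); [exact I | apply filter_true |].
    intros; unfold F; auto_derive; auto.
  - apply Filter_prod with (fun _ => True) (fun _ => True); [exact I | apply filter_true |].
    intros. apply continuous_ext with (fun x => a * exp (- c * x)); [intros; symmetry; apply HDF|].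
    apply (@ex_derive_continuous R_AbsRing R_NormedModule); auto_derive; auto.
  - intros P HP. exact (locally_singleton _ _ HP).
  - pose proof (is_lim_scal_l _ (- a / c) _ _ (is_lim_exp_decay c Hc)) as H.
    simpl in H. rewrite Rmult_0_r in H. exact H.
Qed.

Lemma ex_RInt_gen_Cmod_cexp_sq (c z : C) (r : R) : Re z < 0 ->
  ex_RInt_gen (fun x : R => Cmod (c * cexp (z * x)) ^ 2) (at_point r) (Rbar_locally p_infty).
Proof.
  intros Hz.
  assert (Hmod : forall x : R, Cmod c ^ 2 * exp (- (- 2 * Re z) * x) = Cmod (c * cexp (z * x)) ^ 2).
  { intros x. rewrite Cmod_mult, Cmod_cexp.
    replace (- (- 2 * Re z) * x) with (Re (z * x) + Re (z * x)) by (destruct z; simpl; ring).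
    rewrite exp_plus. ring. }
  apply (ex_RInt_gen_ext_eq _ _ Hmod), ex_RInt_gen_exp_decay. lra.
Qed.

Lemma continuous_Cmod_sq (f : R -> C) (x : R) :
  continuous f x -> continuous (fun t => Cmod (f t) ^ 2) x.
Proof.
  intros Hf.
  apply (continuous_comp (fun t => Cmod (f t)) (fun y => y ^ 2)).
  - apply (continuous_comp f Cmod); [exact Hf|].
    pose proof (@filterlim_norm R_AbsRing C_R_NormedModule (f x)) as Hnorm.
    rewrite <- Cmod_norm in Hnorm.
    exact (filterlim_ext _ _ (fun z => eq_sym (Cmod_norm z)) Hnorm).
  - apply (@ex_derive_continuous R_AbsRing R_NormedModule). auto_derive. exact I.
Qed.

Lemma is_eigenvalue_glue (g Rr : R) (lam : C) (f f' h h' : R -> C) :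
  0 < Rr -> f 0 = 0%C ->
  (forall x, is_derive f x (f' x)) -> (forall x, is_derive f' x ((iC g - lam) * f x)%C) ->
  (forall x, is_derive h x (h' x)) -> (forall x, is_derive h' x (- lam * h x)%C) ->
  f Rr = h Rr -> f' Rr = h' Rr ->
  ex_RInt_gen (fun x => Cmod (h x) ^ 2) (at_point Rr) (Rbar_locally p_infty) ->
  f Rr <> 0%C ->
  is_eigenvalue g Rr lam.
Proof.
  intros HR Hf0 Df Df' Dh Dh' Hval Hslope Hint Hnz.
  set (u := glue Rr f h). set (u' := glue Rr f' h').
  assert (Du : forall x, is_derive u x (u' x)).
  { intros x. destruct (Req_dec x Rr) as [->|Hx].
    - replace (u' Rr) with (f' Rr) by (unfold u', glue; destruct (Rle_dec Rr Rr); [reflexivity|lra]).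
      apply is_derive_glue_eq; [exact Hval | apply Df | rewrite Hslope; apply Dh].
    - apply is_derive_glue_neq; auto. }
  assert (Du' : forall x, x <> Rr -> is_derive u' x ((pot g Rr x - lam) * u x)%C).
  { intros x Hx.
    replace ((pot g Rr x - lam) * u x)%C
      with (glue Rr (fun t => (iC g - lam) * f t) (fun t => - lam * h t) x)%C.
    - apply is_derive_glue_neq; auto.
    - unfold glue, u, glue, pot. destruct (Rle_dec x Rr); [reflexivity|].
      apply injective_projections; simpl; ring. }
  assert (Cu : forall x, continuous u x).
  { intros x. apply (@ex_derive_continuous R_AbsRing C_R_NormedModule). eexists; apply Du. }
  exists u, u'.
  split; [|split; [|split; [|split; [|split; [|split]]]]].
  - unfold u, glue. destruct (Rle_dec 0 Rr); [exact Hf0 | lra].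
  - eapply filterlim_filter_le_1; [apply filter_le_within | apply Cu].
  - intros x _. apply Du.
  - intros x _. destruct (Req_dec x Rr) as [->|Hx].
    + unfold u'. apply (continuous_glue_eq (V := C_R_NormedModule)); [exact Hslope|..];
        apply (@ex_derive_continuous R_AbsRing C_R_NormedModule); eexists; [apply Df' | apply Dh'].
    + apply (@ex_derive_continuous R_AbsRing C_R_NormedModule). eexists; apply Du'; exact Hx.
  - intros x _ Hx. apply Du'; exact Hx.
  - apply ex_RInt_gen_Chasles with Rr.
    + apply (proj2 (@ex_RInt_gen_at_point R_CompleteNormedModule _ _ _)).
      apply (@ex_RInt_continuous R_CompleteNormedModule).
      intros x _. apply continuous_Cmod_sq, Cu.
    + apply (ex_RInt_gen_ext (fun x => Cmod (h x) ^ 2)); [|exact Hint].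
      apply Filter_prod with (fun a => a = Rr) (fun b => Rr < b); [reflexivity | exists Rr; auto |].
      intros a b -> Hb x Hx. simpl in Hx. rewrite Rmin_left, Rmax_right in Hx by lra.
      unfold u, glue. destruct (Rle_dec x Rr); [lra | reflexivity].
  - exists Rr. split; [exact HR|].
    unfold u, glue. destruct (Rle_dec Rr Rr); [exact Hnz | lra].
Qed.

Lemma is_eigenvalue_expsum (g Rr : R) (lam z kappa : C) :
  0 < Rr -> Re z <> 0 -> Re kappa < 0 ->
  (z * z = iC g - lam)%C -> (kappa * kappa = - lam)%C ->
  (expsum z z z Rr = kappa * expsum 1 (-1) z Rr)%C ->
  is_eigenvalue g Rr lam.
Proof.
  intros HR Hz Hkappa Hz2 Hkappa2 Hslope.
  set (c := (expsum 1 (-1) z Rr * cexp (- kappa * Rr))%C).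
  assert (Hunit : (cexp (- kappa * Rr) * cexp (kappa * Rr) = 1)%C).
  { replace (- kappa * Rr)%C with (- (kappa * Rr))%C by ring. apply cexp_opp_mul. }
  apply (is_eigenvalue_glue g Rr lam (expsum 1 (-1) z) (expsum z z z)
           (fun t : R => c * cexp (kappa * t))%C (fun t : R => c * kappa * cexp (kappa * t))%C HR).
  - unfold expsum. replace (z * 0)%C with (RtoC 0) by ring.
    replace (- z * 0)%C with (RtoC 0) by ring. rewrite cexp_0. ring.
  - intros x. replace (expsum z z z x) with (expsum (1 * z) (- (-1 * z)) z x) by (f_equal; ring).
    apply is_derive_expsum.
  - intros x. replace ((iC g - lam) * expsum 1 (-1) z x)%C with (expsum (z * z) (- (z * z)) z x)
      by (rewrite <- Hz2; unfold expsum; ring).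
    apply is_derive_expsum.
  - intros x. apply is_derive_cexp_mult.
  - intros x. replace (- lam * (c * cexp (kappa * x)))%C with (c * kappa * kappa * cexp (kappa * x))%C
      by (rewrite <- Hkappa2; ring).
    apply is_derive_cexp_mult.
  - unfold c. rewrite <- Cmult_assoc, Hunit. ring.
  - unfold c. rewrite Hslope.
    transitivity (kappa * expsum 1 (-1) z Rr * (cexp (- kappa * Rr) * cexp (kappa * Rr)))%C;
      [rewrite Hunit | ]; ring.
  - apply ex_RInt_gen_Cmod_cexp_sq. exact Hkappa.
  - unfold expsum. intros H0.
    apply (cexp_neq_cexp_opp (z * Rr)).
    + replace (Re (z * Rr)) with (Re z * Rr) by (unfold Re; simpl; ring).
      apply Rmult_integral_contrapositive_currified; lra.
    + replace (- (z * Rr))%C with (- z * Rr)%C by ring.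
      transitivity (1 * cexp (z * Rr) + -1 * cexp (- z * Rr) + cexp (- z * Rr))%C;
        [ring | rewrite H0; ring].
Qed.

Lemma derivative_matching (P Q w k : C) :
  (Q * P = 1)%C -> (P * P * (k - w) = k + w)%C -> (w * (P + Q) = k * (P - Q))%C.
Proof.
  intros HQP HPP.
  assert (Hdiff : (w * (P + Q) - k * (P - Q) = Q * ((k + w) - P * P * (k - w)))%C).
  { transitivity (Q * (k + w) - (Q * P) * (P * (k - w)))%C.
    - rewrite HQP. ring.
    - ring. }
  transitivity (w * (P + Q) - k * (P - Q) + k * (P - Q))%C; [ring|].
  rewrite Hdiff, HPP. ring.
Qed.

Lemma G_fun_fixed_cexp (g Rr : R) (j : nat) (w : C) :
  0 < Rr -> ratio g w <> 0%C -> w = G_fun g Rr j w ->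
  (cexp (2 * Rr * (Ci * w)) * ratio g w)%C = 1%C.
Proof.
  intros HR Hr Hfix.
  set (r := ratio g w) in *.
  assert (Hw : w = (- (arg_m r + 2 * PI * INR j) / (2 * Rr), ln (Cmod r) / (2 * Rr))) by exact Hfix.
  assert (Hsum : (2 * Rr * (Ci * w) + (0, 2 * PI * INR j)%R + (ln (Cmod r), arg_m r)%R = 0)%C).
  { rewrite Hw. apply injective_projections; simpl; field; lra. }
  transitivity (cexp (2 * Rr * (Ci * w)) * cexp (0, 2 * PI * INR j)%R * cexp (ln (Cmod r), arg_m r)%R)%C.
  - rewrite cexp_2PI_INR, cexp_ln_Cmod_arg_m by exact Hr. ring.
  - rewrite <- !cexp_add, Hsum. apply cexp_0.
Qed.

Lemma fixed_point_matching (g Rr : R) (j : nat) (w : C) :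
  0 < g -> 0 < Rr -> w = G_fun g Rr j w ->
  let k := sq_m (w * w + iC g) in
  let P := cexp (Ci * w * Rr) in
  (P * P * (k - w) = k + w)%C.
Proof.
  intros Hg HR Hfix k P.
  assert (Hfac : ((k + w) * (k - w) = iC g)%C).
  { transitivity (k * k - w * w)%C; [ring|]. unfold k. rewrite sq_m_mul_self. ring. }
  assert (Hg0 : iC g <> 0%C) by (intros H; apply (f_equal snd) in H; simpl in H; lra).
  assert (Hp : (k + w <> 0)%C) by (intros H; apply Hg0; rewrite <- Hfac, H; ring).
  assert (Hm : (k - w <> 0)%C) by (intros H; apply Hg0; rewrite <- Hfac, H; ring).
  assert (Hratio : ratio g w = ((k - w) / (k + w))%C) by reflexivity.
  assert (Hr0 : ratio g w <> 0%C).
  { rewrite Hratio. intros H. apply Hm.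
    transitivity ((k - w) / (k + w) * (k + w))%C; [field; exact Hp | rewrite H; ring]. }
  assert (HPP : (P * P = cexp (2 * Rr * (Ci * w)))%C).
  { unfold P. rewrite <- cexp_add. f_equal. ring. }
  pose proof (G_fun_fixed_cexp g Rr j w HR Hr0 Hfix) as Hone.
  rewrite <- HPP, Hratio in Hone.
  transitivity (P * P * ((k - w) / (k + w)) * (k + w))%C; [field; exact Hp|].
  rewrite Hone. ring.
Qed.

Theorem lemma2p2 (gamma Rr : R) (j : nat) (w : C) :
  0 < gamma -> 0 < Rr ->
  0 < Im w ->
  w = G_fun gamma Rr j w ->
  0 < Im (w * w + iC gamma)%C ->
  in_sigma_d gamma Rr (w * w + iC gamma)%C.
Proof.
  intros Hg HR Hw Hfix Hlam.
  split; [intros [Him _]; lra|].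
  pose proof (fixed_point_matching gamma Rr j w Hg HR Hfix) as Hmatch. cbv zeta in Hmatch.
  set (lam := (w * w + iC gamma)%C) in *.
  set (k := sq_m lam) in *.
  assert (Hk : 0 < Im k) by exact (Im_sq_m_pos lam Hlam).
  assert (Hk2 : (k * k = lam)%C) by apply sq_m_mul_self.
  set (P := cexp (Ci * w * Rr)) in *.
  set (Q := cexp (- (Ci * w) * Rr)).
  assert (HQP : (Q * P = 1)%C).
  { unfold P, Q. replace (- (Ci * w) * Rr)%C with (- (Ci * w * Rr))%C by ring. apply cexp_opp_mul. }
  pose proof (derivative_matching P Q w k HQP Hmatch) as Hslope.
  apply (is_eigenvalue_expsum gamma Rr lam (Ci * w) (Ci * k) HR).
  - replace (Re (Ci * w)) with (- Im w) by (unfold Re, Im; simpl; ring). lra.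
  - replace (Re (Ci * k)) with (- Im k) by (unfold Re, Im; simpl; ring). lra.
  - unfold lam. apply injective_projections; simpl; ring.
  - rewrite <- Hk2. apply injective_projections; simpl; ring.
  - unfold expsum. fold P Q.
    transitivity (Ci * (w * (P + Q)))%C; [ring | rewrite Hslope; ring].
Qed.
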